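(* Let $p,q$ be integers with $1+|p|<|q|$ and $\gcd(p,q)=1$, and assume $t(x)=x^2+px-q$ is irreducible in $\mathbb{Z}[x]$. Then every nonzero endomorphism $\phi$ of $\mathbb{Z}^2$ with nontrivial kernel is not FA-recognizable with respect to $\psi_{p,q}$, i.e. the relation $\{(u,v)\in\mathrm{Dom}_{p,q}^2:\psi_{p,q}(v)=\phi(\psi_{p,q}(u))\}$ is not FA-recognizable.
   Context: For $f,g\in\mathbb{Z}[x]$ write $f\sim g$ if $t$ divides $f-g$; identify $\mathbb{Z}^2$ with the additive group of $\mathbb{Z}[x]/\langle t\rangle$ via $(h_1,h_2)\mapsto[h_1x+h_2]_\sim$. Let $\Sigma_q=\{-(|q|-1),\dots,|q|-1\}$ with the order $-(|q|-1)<\dots<|q|-1$; a string $a_0a_1\dots a_n\in\Sigma_q^*$ represents the polynomial $a_nx^n+\dots+a_1x+a_0$, and two strings are equivalent if their polynomials are $\sim$-equivalent. $\mathrm{Dom}_{p,q}$ is the set of $w\in\Sigma_q^*$ such that no string strictly smaller than $w$ in the length-lexicographic order on $\Sigma_q^*$ is equivalent to $w$, and $\psi_{p,q}:\mathrm{Dom}_{p,q}\to\mathbb{Z}^2$ sends $w$ to the $\sim$-class of the polynomial it represents. Convolution of strings pads shorter strings with a new symbol $\diamond$ and stacks them letterwise; a relation on strings is FA-recognizable if the set of convolutions of its tuples is accepted by a finite automaton. *)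

From HB Require Import structures.
From mathcomp Require Import all_boot all_order all_algebra.
Set Implicit Arguments. Unset Strict Implicit. Unset Printing Implicit Defensive.
Import Order.TTheory GRing.Theory Num.Theory.
Local Open Scope ring_scope.

Definition tpoly (p q : int) : {poly int} := 'X^2 + p%:P * 'X - q%:P.

Definition irreducible_Zx (f : {poly int}) : Prop :=
  f \isn't a GRing.unit /\
  forall a b : {poly int}, f = a * b -> a \is a GRing.unit \/ b \is a GRing.unit.

Definition sim (p q : int) (f g : {poly int}) : Prop :=
  exists r : {poly int}, f - g = r * tpoly p q.

Definition is_digit (q : int) (a : int) : bool := `|a| < `|q|.
Definition is_string (q : int) (w : seq int) : bool := all (is_digit q) w.

(* the string a_0 a_1 ... a_n represents a_n x^n + ... + a_1 x + a_0 *)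
Definition str_poly (w : seq int) : {poly int} := Poly w.

Definition str_equiv (p q : int) (u v : seq int) : Prop :=
  sim p q (str_poly u) (str_poly v).

Fixpoint lex_lt (u v : seq int) : bool :=
  match u, v with
  | a :: u', b :: v' => (a < b) || ((a == b) && lex_lt u' v')
  | _, _ => false
  end.

Definition llex_lt (u v : seq int) : bool :=
  (size u < size v)%N || ((size u == size v) && lex_lt u v).

Definition Dom (p q : int) (w : seq int) : Prop :=
  is_string q w /\
  forall u : seq int, is_string q u -> llex_lt u w -> ~ str_equiv p q u w.

(* psi_{p,q}(w) = h, where Z^2 is identified with Z[x]/<t> via
   (h1,h2) |-> [h1 x + h2] *)
Definition psi_is (p q : int) (w : seq int) (h : int * int) : Prop :=
  sim p q (str_poly w) (h.1%:P * 'X + h.2%:P).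

Definition is_endo (f : int * int -> int * int) : Prop :=
  forall a b : int * int,
    f (a.1 + b.1, a.2 + b.2) = ((f a).1 + (f b).1, (f a).2 + (f b).2).

Definition pad_nth (w : seq int) (i : nat) : option int :=
  if (i < size w)%N then Some (nth 0 w i) else None.
Definition conv (u v : seq int) : seq (option int * option int) :=
  mkseq (fun i => (pad_nth u i, pad_nth v i)) (maxn (size u) (size v)).

Definition dfa_accepts (A : Type) (S : finType) (s0 : S) (delta : S -> A -> S)
  (F : pred S) (w : seq A) : bool := F (foldl delta s0 w).

Definition FA_recognizable (A : Type) (L : seq A -> Prop) : Prop :=
  exists (S : finType) (s0 : S) (delta : S -> A -> S) (F : pred S),
    forall w, dfa_accepts s0 delta F w <-> L w.

Definition FA_recognizable_rel (R : seq int -> seq int -> Prop) : Prop :=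
  FA_recognizable (fun w => exists u v, w = conv u v /\ R u v).

Definition phi_rel (p q : int) (f : int * int -> int * int) (u v : seq int) : Prop :=
  Dom p q u /\ Dom p q v /\ exists h, psi_is p q u h /\ psi_is p q v (f h).

(* If the relation were FA-recognizable, then so would be the language of
   normal forms u with f (psi u) = 0, obtained by pairing u with the empty
   string.  Since ker f is infinite and psi is onto, this language contains
   arbitrarily long words, and pumping one of them gives normal forms xz, xyz
   and xyyz with values in ker f.  The difference D of the values of xyz and xz
   and the difference x^|y| D of the values of xyyz and xyz both lie in ker f,
   which has rank at most 1 as f is nonzero, so det (D, x^|y| D) = 0.  Writing
   x^m = s x + s' in Z[x]/<t>, this determinant is s * det (D, x D), where s is
   prime to q because gcd (p, q) = 1; and det (D, x D) = 0 with D <> 0 would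
   give t a rational, hence integral, root.  So D = 0: the distinct normal
   forms xyz and xz are equivalent, which is absurd. *)

From HB Require Import structures.
From mathcomp Require Import all_boot all_order all_algebra.
From mathcomp Require Import zify ring.
From Stdlib Require Import Classical.

Set Implicit Arguments.
Unset Strict Implicit.
Unset Printing Implicit Defensive.
Import Order.TTheory GRing.Theory Num.Theory.
Local Open Scope ring_scope.

Definition coord_poly (h : int * int) : {poly int} := h.1%:P * 'X + h.2%:P.

Lemma coord_polyB (a b : int * int) :
  coord_poly a - coord_poly b = coord_poly (a - b).
Proof. rewrite /coord_poly /= !rmorphB /=; ring. Qed.

Lemma coord_poly_eq0 (h : int * int) : coord_poly h = 0 -> h = 0.
Proof.
move/eqP; rewrite -size_poly_eq0 size_MXaddC polyC_eq0.
by case: ifP => // /andP[/eqP h1 /eqP h2] _; rewrite [h]surjective_pairing h1 h2.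
Qed.

Lemma size_coord_poly (h : int * int) : (size (coord_poly h) <= 2)%N.
Proof.
rewrite size_MXaddC; case: ifP => // _; rewrite ltnS; exact: size_polyC_leq1.
Qed.

Lemma tpolyE (p q : int) : tpoly p q = 'X^2 + coord_poly (p, - q).
Proof. by rewrite /tpoly /coord_poly polyCN addrA. Qed.

Lemma size_tpoly (p q : int) : size (tpoly p q) = 3%N.
Proof.
by rewrite tpolyE size_polyDl ?size_polyXn // (leq_ltn_trans (size_coord_poly _)).
Qed.

Lemma coord_poly_dvd_tpoly (p q : int) (h : int * int) (r : {poly int}) :
  coord_poly h = r * tpoly p q -> h = 0.
Proof.
move=> E; apply: coord_poly_eq0; rewrite E.
have [-> | r_neq0] := eqVneq r 0; first by rewrite mul0r.
have t_neq0 : tpoly p q != 0 by rewrite -size_poly_eq0 size_tpoly.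
have := size_coord_poly h; rewrite E size_mul // size_tpoly.
rewrite -size_poly_eq0 in r_neq0; move: r_neq0; case: (size r) => //= n _; lia.
Qed.

Section Evaluation.
Variables p q : int.

Lemma sim_sym (f g : {poly int}) : sim p q f g -> sim p q g f.
Proof. by move=> [r E]; exists (- r); rewrite mulNr -E opprB. Qed.

Lemma sim_trans (f g h : {poly int}) : sim p q f g -> sim p q g h -> sim p q f h.
Proof. by move=> [r E] [r' E']; exists (r + r'); rewrite mulrDl -E -E' addrA subrK. Qed.

Lemma sim_coord_poly_inj (a b : int * int) :
  sim p q (coord_poly a) (coord_poly b) -> a = b.
Proof. by move=> [r]; rewrite coord_polyB => /coord_poly_dvd_tpoly /subr0_eq. Qed.

(* Multiplication by x in Z[x]/<t>, where x^2 = q - p x. *)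
Definition mulx (v : int * int) : int * int := (v.2 - p * v.1, q * v.1).

Lemma mulxB : {morph mulx : a b / a - b}.
Proof. by move=> a b; apply: injective_projections => /=; ring. Qed.

HB.instance Definition _ := GRing.isZmodMorphism.Build _ _ mulx mulxB.

Fixpoint str_val (w : seq int) : int * int :=
  if w is d :: w' then (0, d) + mulx (str_val w') else 0.

Lemma sim_str_val (w : seq int) : sim p q (str_poly w) (coord_poly (str_val w)).
Proof.
elim: w => [|d w [r IH]]; first by exists 0; rewrite /coord_poly /= !mul0r !addr0 subr0.
exists (r * 'X + (str_val w).1%:P).
rewrite /str_poly /= cons_poly_def.
have -> : Poly w = r * tpoly p q + coord_poly (str_val w) by rewrite -IH subrK.
rewrite /coord_poly /tpoly /mulx /= !(rmorphD, rmorphB, rmorphM) /= expr2; ring.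
Qed.

Lemma psi_isE (w : seq int) (h : int * int) : psi_is p q w h <-> h = str_val w.
Proof.
split=> [E | ->]; last exact: sim_str_val.
exact: (@sim_coord_poly_inj h) (sim_trans (sim_sym E) (sim_str_val w)).
Qed.

Lemma str_equivE (u v : seq int) : str_equiv p q u v <-> str_val u = str_val v.
Proof.
split=> [E | E].
  exact: sim_coord_poly_inj
    (sim_trans (sim_sym (sim_str_val u)) (sim_trans E (sim_str_val v))).
by apply: (sim_trans (sim_str_val u)); rewrite E; apply/sim_sym/sim_str_val.
Qed.

Lemma str_val_cat (u v : seq int) :
  str_val (u ++ v) = str_val u + iter (size u) mulx (str_val v).
Proof. by elim: u => [|d u IH] /=; rewrite ?add0r // IH raddfD addrA. Qed.

End Evaluation.

Lemma iter_mulxB (p q : int) (n : nat) :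
  {morph iter n (mulx p q) : a b / a - b}.
Proof. by move=> a b; elim: n => //= n ->; rewrite raddfB. Qed.

Lemma lex_lt_total (u v : seq int) :
  size u = size v -> u <> v -> lex_lt u v \/ lex_lt v u.
Proof.
elim: u v => [|a u IH] [|b v] //= [E] uv.
have [ab|ab|ab] := ltgtP a b; [by left | by right | subst b].
by have [|->|->] := IH v E; [congruence | left | right].
Qed.

Lemma llex_lt_total (u v : seq int) : u <> v -> llex_lt u v \/ llex_lt v u.
Proof.
rewrite /llex_lt => uv; have [lt|gt|E] := ltngtP (size u) (size v).
- by left.
- by right.
- exact: lex_lt_total.
Qed.

Lemma Dom_nil (p q : int) : Dom p q [::].
Proof. by split=> // u _; rewrite /llex_lt; case: u. Qed.

Lemma Dom_inj (p q : int) (u v : seq int) : Dom p q u -> Dom p q v ->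
  str_val p q u = str_val p q v -> u = v.
Proof.
move=> [su Du] [sv Dv] /str_equivE E; apply/eqP/contraT => /eqP uv.
have [lt|lt] := llex_lt_total uv.
- by case: (Dv u su lt E).
- by case: (Du v sv lt (sim_sym E)).
Qed.

Section NormalForm.
Variable q : int.
Hypothesis q_gt1 : 1 < `|q|.

(* A string is read as a numeral in base 2|q| - 1 with digits shifted to be
   nonnegative; the extra leading power of the radix makes the
   length-lexicographic order numeric. *)
Definition digit_rank (a : int) : nat := absz (a + (`|q| - 1)).
Definition radix : nat := (2 * absz q - 1)%N.

Fixpoint lex_rank (w : seq int) : nat :=
  if w is a :: w' then (digit_rank a * radix ^ size w' + lex_rank w')%N else 0%N.

Definition llex_rank (w : seq int) : nat := (radix ^ size w + lex_rank w)%N.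

Lemma lex_rank_lt (w : seq int) : is_string q w -> (lex_rank w < radix ^ size w)%N.
Proof.
elim: w => [|a w IH] //= /andP[a_digit /IH lt_w]; rewrite expnS.
have : (digit_rank a < radix)%N by move: a_digit; rewrite /is_digit /digit_rank /radix; lia.
nia.
Qed.

Lemma lex_rank_mono (u v : seq int) : is_string q u -> is_string q v ->
  size u = size v -> lex_lt u v -> (lex_rank u < lex_rank v)%N.
Proof.
elim: u v => [|a u IH] [|b v] //= /andP[a_digit su] /andP[b_digit sv] [E].
case/orP=> [ab | /andP[/eqP <- lt_uv]]; last by rewrite E ltn_add2l IH.
have : (digit_rank a < digit_rank b)%N.
  by move: a_digit b_digit ab; rewrite /is_digit /digit_rank; lia.
have := lex_rank_lt su; rewrite E; nia.
Qed.

Lemma llex_rank_mono (u v : seq int) : is_string q u -> is_string q v ->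
  llex_lt u v -> (llex_rank u < llex_rank v)%N.
Proof.
move=> su sv /orP[lt_uv | /andP[/eqP E lt_uv]]; last first.
  by rewrite /llex_rank E ltn_add2l lex_rank_mono.
have radix_ge2 : (2 <= radix)%N by rewrite /radix; lia.
have : (radix ^ (size u).+1 <= radix ^ size v)%N by rewrite leq_pexp2l //; lia.
have := lex_rank_lt su; rewrite /llex_rank expnS; nia.
Qed.

Lemma Dom_exists (p : int) (w : seq int) : is_string q w ->
  exists2 u, Dom p q u & str_val p q u = str_val p q w.
Proof.
have [n] := ubnP (llex_rank w); elim: n w => // n IH w lt_w sw.
have [[u [su lt_uw E]] | minimal] :=
  classic (exists u, [/\ is_string q u, llex_lt u w & str_val p q u = str_val p q w]).
  have [|v Dv Ev] := IH u _ su; last by exists v => //; rewrite Ev.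
  by have := llex_rank_mono su sw lt_uw; lia.
exists w => //; split=> // u su lt_uw /str_equivE E; apply: minimal; by exists u.
Qed.

End NormalForm.

Lemma divz_trunc (m d : int) : d != 0 ->
  exists k r, [/\ m = k * d + r, `|r| < `|d| & `|k| * `|d| <= `|m|].
Proof.
move=> d_neq0; wlog m_ge0 : m / 0 <= m => [wlog_m|].
  have [|m_lt0] := lerP 0 m; first exact: wlog_m.
  have [|k [r [E lt_r le_k]]] := wlog_m (- m); first lia.
  by exists (- k), (- r); rewrite mulNr -opprD -E opprK !normrN -(normrN m).
exists (m %/ d)%Z, (m %% d)%Z; rewrite -divz_eq.
have r_ge0 := modz_ge0 m d_neq0; have lt_r := ltz_mod m d_neq0.
split=> //; first lia.
have E := divz_eq m d; set k := (m %/ d)%Z in E *.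
have kd_ge0 : 0 <= k * d.
  have [//|kd_lt0] := lerP 0 (k * d).
  have k_neq0 : k != 0 by apply: contraTneq kd_lt0 => ->; rewrite mul0r.
  have : `|d| <= `|k * d| by rewrite normrM ler_peMl // norm_intr_ge1.
  lia.
by rewrite -normrM !ger0_norm //; lia.
Qed.

Section Surjectivity.
Variables p q : int.
Hypothesis hpq : 1 + `|p| < `|q|.

(* One digit of [str_val_step] maps (c1, c0) to (c0 / q, c1 + p (c0 / q)); the
   last summand makes the measure drop also when c0 = 0. *)
Definition surj_measure (h : int * int) : nat :=
  (2 * (absz h.1 + absz h.2) + (h.1 != 0))%N.

Lemma str_val_step (h : int * int) : h != 0 ->
  exists d v, [/\ is_digit q d, h = (0, d) + mulx p q v
                & (surj_measure v < surj_measure h)%N].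
Proof.
case: h => c1 c0 h_neq0.
have q_neq0 : q != 0 by rewrite -normr_gt0; lia.
have [c [d [E lt_d le_c]]] := divz_trunc c0 q_neq0.
exists d, (c, c1 + p * c); split=> //.
  by apply: injective_projections => /=; rewrite ?E; ring.
have le_pc : `|c1 + p * c| <= `|c1| + `|p| * `|c| by rewrite -normrM ler_normD.
have [c_eq0 | c_neq0] := eqVneq c 0.
  move: h_neq0; rewrite /surj_measure /= c_eq0 mulr0 addr0 -pair_eqE /=.
  case: eqVneq => [_ | c1_neq0] /=; lia.
have : (1 + `|p|) * `|c| < `|q| * `|c| by rewrite ltr_pM2r ?normr_gt0.
rewrite /surj_measure /= c_neq0; case: (c1 != 0) => /=; lia.
Qed.

Lemma str_val_surj (h : int * int) : exists2 w, is_string q w & str_val p q w = h.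
Proof.
have [n] := ubnP (surj_measure h); elim: n h => // n IH h lt_h.
have [-> | h_neq0] := eqVneq h 0; first by exists [::].
have [d [v [d_digit Eh lt_v]]] := str_val_step h_neq0; subst h.
have [|w sw <-] := IH v; first exact: leq_trans lt_v lt_h.
by exists (d :: w); rewrite /= ?d_digit.
Qed.

End Surjectivity.

Definition norm1 (h : int * int) : int := `|h.1| + `|h.2|.

Lemma str_val_bounded (p q : int) (N : nat) : exists B, forall w,
  is_string q w -> (size w <= N)%N -> norm1 (str_val p q w) <= B.
Proof.
elim: N => [|N [B IH]]; first by exists 0 => -[].
have B_ge0 : 0 <= B by apply: le_trans (IH [::] _ _).
exists ((1 + `|p| + `|q|) * B + `|q|) => -[|d w] /=; first by rewrite /norm1 /=; lia.
move=> /andP[d_digit sw] le_w; have := IH w sw le_w; rewrite /is_digit in d_digit.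
rewrite /norm1 /=; set v := str_val p q w => le_v.
have le1 : `|v.2 - p * v.1| <= `|v.2| + `|p| * `|v.1| by rewrite -normrM ler_normB.
have le2 : `|d + q * v.1| <= `|d| + `|q| * `|v.1| by rewrite -normrM ler_normD.
have : (1 + `|p| + `|q|) * (`|v.1| + `|v.2|) <= (1 + `|p| + `|q|) * B by rewrite ler_wpM2l.
have -> : (1 + `|p| + `|q|) * (`|v.1| + `|v.2|) =
  `|v.1| + `|v.2| + `|p| * `|v.1| + `|p| * `|v.2| + `|q| * `|v.1| + `|q| * `|v.2| by ring.
have : 0 <= `|p| * `|v.2| by []. have : 0 <= `|q| * `|v.2| by [].
lia.
Qed.

Lemma pairMzE (v : int * int) (n : int) : v *~ n = (v.1 * n, v.2 * n).
Proof.
by apply: injective_projections; rewrite /= ?(raddfMz fst) ?(raddfMz snd) mulrzz.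
Qed.

Definition det2 (u v : int * int) : int := u.1 * v.2 - u.2 * v.1.

Lemma det2_cramer (u v w : int * int) :
  w *~ det2 u v = u *~ det2 w v + v *~ det2 u w.
Proof. by rewrite !pairMzE /det2; apply: injective_projections => /=; ring. Qed.

(* b / a is a rational root; once a and b are divided by their gcd, Bezout
   shows that a divides 1. *)
Lemma homogeneous_quadratic_root (c1 c0 a b : int) : a != 0 ->
  b ^+ 2 + c1 * a * b + c0 * a ^+ 2 = 0 -> exists r, r ^+ 2 + c1 * r + c0 = 0.
Proof.
move=> a_neq0 E; have [u [v Euv]] := Bezoutz a b.
have g_neq0 : gcdz a b != 0 by rewrite gcdz_eq0 negb_and a_neq0.
move: (divzK (dvdz_gcdl a b)) (divzK (dvdz_gcdr a b)) E Euv g_neq0.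
move: (gcdz a b) (a %/ gcdz a b)%Z (b %/ gcdz a b)%Z => g a' b' <- <- E Euv g_neq0.
have bezout : u * a' + v * b' = 1.
  by apply: (mulIf g_neq0); rewrite mul1r -[X in _ = X]Euv; ring.
have /eqP : g ^+ 2 * (b' ^+ 2 + c1 * a' * b' + c0 * a' ^+ 2) = 0 by rewrite -E; ring.
rewrite mulf_eq0 expf_eq0 (negbTE g_neq0) andbF /= => /eqP E'.
have : (a' %| 1%R)%Z.
  have -> : 1 = a' * (u ^+ 2 * a' + 2 * u * v * b' - v ^+ 2 * (c1 * b' + c0 * a'))
              + v ^+ 2 * (b' ^+ 2 + c1 * a' * b' + c0 * a' ^+ 2).
    by rewrite -(expr1n _ 2) -[in LHS]bezout; ring.
  by rewrite E' mulr0 addr0 dvdz_mulr.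
rewrite dvdz1 => /eqP a'_norm1.
have a'2 : a' ^+ 2 = 1 by apply/eqP; rewrite sqr_norm_eq1 -abszE a'_norm1.
exists (b' * a').
have -> : (b' * a') ^+ 2 + c1 * (b' * a') + c0 =
  (b' ^+ 2 + c1 * a' * b' + c0 * a' ^+ 2) + (b' ^+ 2 - c0) * (a' ^+ 2 - 1) by ring.
by rewrite E' a'2 subrr mulr0 addr0.
Qed.

Section Companion.
Variables p q : int.

Lemma tpoly_no_int_root (r : int) :
  irreducible_Zx (tpoly p q) -> r ^+ 2 + p * r - q != 0.
Proof.
move=> [_ tpoly_irr]; apply/eqP => root_r.
have : tpoly p q = ('X - r%:P) * ('X - (- (r + p))%:P).
  have -> : q = r ^+ 2 + p * r by apply/eqP; rewrite eq_sym -subr_eq0 root_r.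
  rewrite /tpoly !(rmorphN, rmorphD, rmorphM) /= expr2; ring.
by move/tpoly_irr; rewrite !poly_unitE !size_XsubC; case.
Qed.

Lemma det2_mulx_eq0 (v : int * int) : irreducible_Zx (tpoly p q) ->
  det2 v (mulx p q v) = 0 -> v = 0.
Proof.
case: v => a b tpoly_irr; rewrite /det2 /mulx /=.
have [-> E | a_neq0 E] := eqVneq a 0.
  move: E; rewrite !(mul0r, mulr0) subr0 sub0r => /eqP.
  by rewrite oppr_eq0 mulf_eq0 orbb => /eqP->.
have [|r root_r] := @homogeneous_quadratic_root (- p) (- q) a b a_neq0.
  by rewrite -[RHS]oppr0 -E; ring.
by have := tpoly_no_int_root (- r) tpoly_irr; rewrite -root_r sqrrN mulrN mulNr eqxx.
Qed.

Definition xpow (m : nat) : int * int := iter m (mulx p q) (0, 1).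

(* Multiplication by x^m = (xpow m).1 x + (xpow m).2, as in Cayley-Hamilton. *)
Lemma iter_mulx (m : nat) (v : int * int) :
  iter m (mulx p q) v = mulx p q v *~ (xpow m).1 + v *~ (xpow m).2.
Proof.
elim: m => [|m IH]; first by rewrite /= mulr0z add0r mulr1z.
rewrite iterS IH /xpow iterS -/(xpow m) !pairMzE /mulx /=.
by apply: injective_projections => /=; ring.
Qed.

Lemma det2_iter_mulx (m : nat) (v : int * int) :
  det2 v (iter m (mulx p q) v) = (xpow m).1 * det2 v (mulx p q v).
Proof. by rewrite iter_mulx pairMzE /det2 /=; ring. Qed.

(* (xpow m.+1).1 = (-p)^m modulo q. *)
Lemma xpow_coprime (m : nat) : coprimez p q -> coprimez q (xpow m.+1).1.
Proof.
move=> co_pq; elim: m => [|m IH]; first by rewrite /= mulr0 subr0 /coprimez gcdz1.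
have -> : (xpow m.+2).1 = (xpow m).1 * q - p * (xpow m.+1).1 by rewrite /= mulrC.
by rewrite /coprimez gcdzMDl gcdzN Gauss_gcdzr // coprimez_sym.
Qed.

End Companion.

Lemma str_val_cat_diff (p q : int) (x u v : seq int) :
  str_val p q (x ++ u) - str_val p q (x ++ v) =
  iter (size x) (mulx p q) (str_val p q u - str_val p q v).
Proof. by rewrite !str_val_cat opprD addrACA subrr add0r iter_mulxB. Qed.

Lemma norm1Mz (h : int * int) (n : int) : norm1 (h *~ n) = norm1 h * `|n|.
Proof. by rewrite pairMzE /norm1 /= !normrM mulrDl. Qed.

Lemma norm1_ge1 (h : int * int) : h != 0 -> 1 <= norm1 h.
Proof. by case: h => a b; rewrite /norm1 -pair_eqE /=; lia. Qed.

Lemma is_endoB (f : int * int -> int * int) : is_endo f -> {morph f : a b / a - b}.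
Proof.
move=> hf a b; have fD : {morph f : a b / a + b} by move=> [? ?] [? ?]; apply: hf.
by apply/eqP; rewrite eq_sym subr_eq -fD subrK.
Qed.

Section Kernel.
Variables (p q : int) (f : int * int -> int * int).
Hypothesis hf : is_endo f.
Hypothesis f_neq0 : exists h, f h <> 0.

HB.instance Definition _ := GRing.isZmodMorphism.Build _ _ f (is_endoB hf).

Lemma Dom_kernel_long (k : int * int) (N : nat) :
  1 + `|p| < `|q| -> k != 0 -> f k = 0 ->
  exists u, [/\ Dom p q u, f (str_val p q u) = 0 & (N < size u)%N].
Proof.
move=> hpq k_neq0 fk; have q_gt1 : 1 < `|q| by lia.
have [B le_B] := str_val_bounded p q N.
have B_ge0 : 0 <= B by apply: le_trans (le_B [::] _ _).
have [w sw Ew] := str_val_surj hpq (k *~ (B + 1)).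
have [u Du Eu] := Dom_exists q_gt1 p sw.
exists u; split=> //; first by rewrite Eu Ew raddfMz /= fk mul0rz.
rewrite ltnNge; apply/negP => /(le_B u Du.1); rewrite Eu Ew norm1Mz.
have : B + 1 <= norm1 k * (B + 1) by rewrite ler_peMl ?norm1_ge1 //; lia.
by rewrite ger0_norm; lia.
Qed.

(* By [det2_cramer], f kills det2 u v times every vector. *)
Lemma kernel_det2 (u v : int * int) : f u = 0 -> f v = 0 -> det2 u v = 0.
Proof.
move=> fu fv; apply/eqP/contraT => det_neq0; have [h []] := f_neq0.
have : f h *~ det2 u v = 0.
  by rewrite -raddfMz det2_cramer raddfD !raddfMz /= fu fv !mul0rz addr0.
case: (f h) => a b; rewrite pairMzE => -[/eqP + /eqP].
by rewrite !mulf_eq0 (negbTE det_neq0) !orbF => /eqP-> /eqP->.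
Qed.

Hypothesis q_gt1 : 1 < `|q|.
Hypothesis hgcd : coprimez p q.
Hypothesis tpoly_irr : irreducible_Zx (tpoly p q).

Lemma kernel_iter_mulx_eq0 (m : nat) (v : int * int) :
  f v = 0 -> f (iter m.+1 (mulx p q) v) = 0 -> v = 0.
Proof.
move=> fv fmv; apply: det2_mulx_eq0 tpoly_irr _.
have /eqP := kernel_det2 fv fmv.
rewrite det2_iter_mulx mulf_eq0 => /orP[/eqP xpow0 | /eqP //].
by have := xpow_coprime m hgcd; rewrite xpow0 /coprimez gcdz0 abszE; lia.
Qed.

Lemma pumped_str_val_eq (x y z : seq int) : (0 < size y)%N ->
  f (str_val p q (x ++ z)) = 0 -> f (str_val p q (x ++ y ++ z)) = 0 ->
  f (str_val p q (x ++ y ++ y ++ z)) = 0 ->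
  str_val p q (x ++ y ++ z) = str_val p q (x ++ z).
Proof.
move=> y_gt0 f0 f1 f2; apply/eqP; rewrite -subr_eq0; apply/eqP.
have E2 : str_val p q (x ++ y ++ y ++ z) - str_val p q (x ++ y ++ z) =
          iter (size y) (mulx p q) (str_val p q (x ++ y ++ z) - str_val p q (x ++ z)).
  by rewrite !str_val_cat_diff -!iterD addnC.
rewrite -(prednK y_gt0) in E2; apply: (kernel_iter_mulx_eq0 (m := (size y).-1)).
  by rewrite raddfB /= f1 f0 subrr.
by rewrite -E2 raddfB /= f2 f1 subrr.
Qed.

End Kernel.

Section Pumping.
Variables (A : Type) (S : finType) (s0 : S) (delta : S -> A -> S).

Lemma foldl_loop (u : seq A) : (#|S| < size u)%N -> exists x y z,
  [/\ u = x ++ y ++ z, (0 < size y)%N & foldl delta s0 (x ++ y) = foldl delta s0 x].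
Proof.
move=> lt_u; pose g (i : 'I_#|S|.+1) := foldl delta s0 (take i u).
have loop (i j : 'I_#|S|.+1) : (i < j)%N -> g i = g j -> exists x y z,
    [/\ u = x ++ y ++ z, (0 < size y)%N & foldl delta s0 (x ++ y) = foldl delta s0 x].
  move=> lt_ij gij; exists (take i u), (drop i (take j u)), (drop j u).
  have le_j : (j <= size u)%N by have := ltn_ord j; lia.
  have E : take i u ++ drop i (take j u) = take j u.
    by rewrite -{1}(take_takel u (ltnW lt_ij)) cat_take_drop.
  split; [by rewrite catA E cat_take_drop | | by rewrite E].
  by rewrite size_drop size_takel // subn_gt0.
have /injectivePn[i [j ij gij]] : ~~ injectiveb g.
  by apply/injectiveP => /leq_card; rewrite card_ord ltnn.
case: (ltngtP i j) => [lt_ij | lt_ji | /val_inj eq_ij]; first exact: loop gij.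
  exact: loop (esym gij).
by rewrite eq_ij eqxx in ij.
Qed.

Lemma foldl_pump (x y : seq A) (k : nat) :
  foldl delta s0 (x ++ y) = foldl delta s0 x ->
  foldl delta s0 (x ++ flatten (nseq k y)) = foldl delta s0 x.
Proof.
move=> loop_y; elim: k => [|k IH]; first by rewrite cats0.
by rewrite /= catA foldl_cat loop_y -foldl_cat.
Qed.

End Pumping.

Lemma FA_pumping (A : Type) (L : seq A -> Prop) : FA_recognizable L ->
  exists N, forall u, L u -> (N < size u)%N -> exists x y z,
    [/\ u = x ++ y ++ z, (0 < size y)%N & forall k, L (x ++ flatten (nseq k y) ++ z)].
Proof.
move=> [S [s0 [delta [F accept]]]]; exists #|S| => u Lu /(foldl_loop s0 delta).
move=> [x [y [z [Eu y_gt0 loop_y]]]]; exists x, y, z; split=> // k.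
have same_state : foldl delta s0 (x ++ flatten (nseq k y) ++ z) = foldl delta s0 u.
  by rewrite Eu !catA foldl_cat foldl_pump // [in RHS]foldl_cat loop_y.
by apply/accept; rewrite /dfa_accepts same_state; apply/accept.
Qed.

Lemma conv_nil (u : seq int) : conv u [::] = [seq (Some a, None) | a <- u].
Proof.
apply: (@eq_from_nth _ (None, None)) => [|i]; rewrite /conv size_mkseq maxn0 ?size_map //.
by move=> lt_i; rewrite nth_mkseq ?maxn0 // (nth_map 0) // /pad_nth lt_i.
Qed.

Lemma conv_eq_nil (u v w : seq int) : conv u v = conv w [::] -> u = w /\ v = [::].
Proof.
case: v => [|b v] E.
  have inj_pad : injective (fun a : int => (Some a, @None int)) by move=> a c [].
  by rewrite !conv_nil in E; split=> //; apply: inj_map inj_pad _ _ E.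
move/(congr1 (fun s => (nth (None, None) s 0).2)): E.
rewrite conv_nil /conv nth_mkseq ?leq_max ?orbT // /pad_nth /=.
by case: w => [|c w] //= [].
Qed.

Lemma FA_recognizable_rel_nil (R : seq int -> seq int -> Prop) :
  FA_recognizable_rel R -> FA_recognizable (fun u => R u [::]).
Proof.
move=> [S [s0 [delta [F accept]]]].
exists S, s0, (fun s a => delta s (Some a, None)), F => u.
have -> : dfa_accepts s0 (fun s a => delta s (Some a, None)) F u =
          dfa_accepts s0 delta F (conv u [::]).
  by rewrite /dfa_accepts conv_nil; congr F; elim: u (s0) => //= a u IH s; exact: IH.
rewrite accept; split=> [[u' [v [/esym/conv_eq_nil[-> ->]]]] // | Ru].
by exists u, [::].
Qed.

Lemma phi_rel_nilE (p q : int) (f : int * int -> int * int) (u : seq int) :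
  phi_rel p q f u [::] <-> Dom p q u /\ f (str_val p q u) = 0.
Proof.
split=> [[Du [_ [h [/psi_isE -> /psi_isE fu]]]] | [Du fu]]; first by split.
split=> //; split; first exact: Dom_nil.
by exists (str_val p q u); split; apply/psi_isE; rewrite ?fu.
Qed.

Theorem mainTheorem8 (p q : int)
  (hpq : 1 + `|p| < `|q|) (hgcd : gcdz p q = 1%N)
  (hirr : irreducible_Zx (tpoly p q))
  (f : int * int -> int * int) (hf : is_endo f)
  (hnz : exists h, f h <> (0, 0))
  (hker : exists h, h <> (0, 0) /\ f h = (0, 0)) :
  ~ FA_recognizable_rel (phi_rel p q f).
Proof.
move=> /FA_recognizable_rel_nil/FA_pumping[N pump].
have [k [/eqP k_neq0 fk]] := hker.
have [u [Du fu long_u]] := Dom_kernel_long hf N hpq k_neq0 fk.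
have [|x [y [z [Eu y_gt0 Lpump]]]] := pump u _ long_u; first exact/phi_rel_nilE.
have /phi_rel_nilE[Dxz fxz] := Lpump 0%N.
have /phi_rel_nilE[_ fxyyz] := Lpump 2%N.
rewrite Eu in Du fu; rewrite /= in Dxz fxz; rewrite /= cats0 -!catA in fxyyz.
have co_pq : coprimez p q by rewrite /coprimez hgcd.
have q_gt1 : 1 < `|q| by lia.
have := pumped_str_val_eq hf hnz q_gt1 co_pq hirr y_gt0 fxz fu fxyyz.
move/(Dom_inj Du Dxz)/(congr1 size); rewrite !size_cat; lia.
Qed.
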